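(* Let there be two states and let $\mu\in(0,1)$. Suppose the updating rule respects the Blackwell order for $\mu$, and $\varphi=\varphi^{\mu}$ has a contractive error at some $x'\in(\mu,1]$ but produces no expansive error. Then there exists $x^*\in[\mu,x')$ such that $\varphi(x)=x^*$ for all $x\in[x^*,1)$; moreover $\varphi(x)=x$ for all $x\in[\mu,x^*]$ and $\varphi(1)\ge x^*$.
   Context: Two states $\Theta=\{0,1\}$; a belief is identified with the probability of state $1$, so the belief space is $\Delta=[0,1]$, and the prior $\mu\in(0,1)$. An experiment $\pi:\Theta\to\Delta(S)$ ($S$ finite) with prior $\mu$ induces the Bayesian distribution over posteriors $\rho_B$, a finitely supported distribution on $[0,1]$ with mean $\mu$ (every such distribution arises from some experiment). Blackwell order: $\pi\succeq\pi'$ iff $\rho_B'$ is a mean-preserving contraction of $\rho_B$. An updating rule is given, for each prior $\mu$, by a distortion function $\varphi^{\mu}:[0,1]\to[0,1]$: when the Bayesian posterior is $x$, the decision maker holds belief $\varphi^{\mu}(x)$. For a compact action set $A$, continuous $u:A\times\Theta\to\mathbb{R}$, and consistent choice $a^*:[0,1]\to A$ (i.e. $a^*(y)\in\arg\max_{a}\mathbb{E}_y u(a,\theta)$ for all $y$), let $W(x)=\mathbb{E}_x u(a^*(\varphi^{\mu}(x)),\theta)$. The rule respects the Blackwell order for $\mu$ if for all such $A,u,a^*$ and all $\pi\succeq\pi'$, $\mathbb{E}_{\rho_B}W\ge\mathbb{E}_{\rho_B'}W$. $\varphi$ has an expansive error at $x$ if $\varphi(x)$ is not on the closed segment between $x$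 and $\mu$, and a contractive error at $x$ if $\varphi(x)$ is on that segment and $\varphi(x)\ne x$. *)

From HB Require Import structures.
From mathcomp Require Import all_boot all_order all_algebra.
From mathcomp Require Import all_classical all_reals topology normedtype.
Set Implicit Arguments. Unset Strict Implicit. Unset Printing Implicit Defensive.
Import Order.TTheory GRing.Theory Num.Theory.
Import numFieldNormedType.Exports.
Local Open Scope ring_scope.

(* States: Theta = bool, [true] is state 1.  A belief y in [0,1] is the
   probability of state 1. *)

Definition EU {R : realType} {A : Type} (u : A * bool -> R) (y : R) (a : A) : R :=
  (1 - y) * u (a, false) + y * u (a, true).

(* A finitely supported distribution over posteriors with mean mu, given by
   n atoms with weights p i at points x i (duplicates / zero weights allowed). *)
Definition is_post_dist {R : realType} (mu : R) (n : nat)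
  (p : 'I_n -> R) (x : 'I_n -> R) : Prop :=
  (forall i, 0 <= p i) /\ (\sum_(i < n) p i = 1) /\
  (forall i, 0 <= x i <= 1) /\ (\sum_(i < n) p i * x i = mu).

(* (m,q,y) is a mean-preserving contraction of (n,p,x): there is a joint
   distribution J with marginals p and q such that, conditionally on the
   contracted value y j, the expected value of x equals y j. *)
Definition mp_contraction {R : realType} (n : nat) (p : 'I_n -> R) (x : 'I_n -> R)
  (m : nat) (q : 'I_m -> R) (y : 'I_m -> R) : Prop :=
  exists J : 'I_n -> 'I_m -> R,
    (forall i j, 0 <= J i j) /\
    (forall i, \sum_(j < m) J i j = p i) /\
    (forall j, \sum_(i < n) J i j = q j) /\
    (forall j, \sum_(i < n) J i j * x i = q j * y j).

Definition expect {R : realType} (n : nat) (p : 'I_n -> R) (x : 'I_n -> R)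
  (W : R -> R) : R := \sum_(i < n) p i * W (x i).

(* Experiments are represented by their Bayesian distributions
   over posteriors (every finitely supported distribution with mean mu
   arises from some experiment). *)
Definition respects_blackwell {R : realType} (mu : R) (phi : R -> R) : Prop :=
  forall (A : topologicalType) (u : A * bool -> R) (astar : R -> A),
    compact [set: A] -> continuous u ->
    (forall yb, 0 <= yb <= 1 -> forall a, EU u yb a <= EU u yb (astar yb)) ->
    let W := fun z => EU u z (astar (phi z)) in
    forall (n : nat) (p x : 'I_n -> R) (m : nat) (q y : 'I_m -> R),
      is_post_dist mu p x -> is_post_dist mu q y ->
      mp_contraction p x q y ->
      expect q y W <= expect p x W.

Definition on_segment {R : realType} (mu z v : R) : Prop :=
  Num.min z mu <= v <= Num.max z mu.

Definition expansive_error {R : realType} (mu : R) (phi : R -> R) (z : R) : Prop :=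
  ~ on_segment mu z (phi z).

Definition contractive_error {R : realType} (mu : R) (phi : R -> R) (z : R) : Prop :=
  on_segment mu z (phi z) /\ phi z <> z.

(* Blackwell monotonicity makes every induced value function
   W(z) = E_z u(a*(phi z), theta) convex on [0,1]: splitting one posterior y
   into a < y < b is a mean-preserving spread (one extra posterior keeps the
   mean at mu).  For the threshold problem "act iff the belief exceeds t" the
   value is (z - t) [t < phi z], and its convexity shows that both
   t < phi z and, below 1, phi z <= t propagate to larger z.  Starting from a
   contraction phi x0 < x0 in (mu, 1), and using mu <= phi z <= z (no
   expansive error), these propagation facts force phi to be the identity on
   [mu, phi x0] and constant equal to phi x0 on [phi x0, 1). *)

From mathcomp Require Import all_boot all_order all_algebra.
From mathcomp Require Import all_classical all_reals topology normedtype.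
From mathcomp Require Import ring lra.
Import Order.TTheory GRing.Theory Num.Theory.
Import numFieldNormedType.Exports.
Local Open Scope ring_scope.

Definition blackwell_monotone {R : realType} (mu : R) (W : R -> R) : Prop :=
  forall n (p x : 'I_n -> R) m (q y : 'I_m -> R),
    is_post_dist mu p x -> is_post_dist mu q y -> mp_contraction p x q y ->
    expect q y W <= expect p x W.

Lemma mean_completion {R : realType} {mu : R} (y : R) : 0 < mu < 1 -> 0 <= y <= 1 ->
  exists z w, [/\ 0 <= z <= 1, 0 < w <= 1 & w * y + (1 - w) * z = mu].
Proof.
move=> /andP[mu0 mu1] /andP[y0 y1]; have [muy | ymu] := leP mu y.
- have y_gt0 : 0 < y by lra.
  exists 0, (mu / y); split; first by rewrite lexx ler01.
  + apply/andP; split; first exact: divr_gt0.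
    by rewrite ler_pdivrMr // mul1r.
  + by field; lra.
- have y_lt1 : 0 < 1 - y by lra.
  exists 1, ((1 - mu) / (1 - y)); split; first by rewrite lexx ler01.
  + apply/andP; split; first by apply: divr_gt0; lra.
    by rewrite ler_pdivrMr // mul1r; lra.
  + by field; lra.
Qed.

Section BlackwellConvexity.
Context {R : realType} {mu : R} {W : R -> R}.
Hypothesis W_monotone : blackwell_monotone mu W.

Lemma blackwell_monotone_spread {la a b z w : R} :
  0 <= la <= 1 -> 0 <= a <= 1 -> 0 <= b <= 1 -> 0 <= z <= 1 -> 0 < w <= 1 ->
  w * (la * a + (1 - la) * b) + (1 - w) * z = mu ->
  W (la * a + (1 - la) * b) <= la * W a + (1 - la) * W b.
Proof.
move=> /andP[la0 la1] /andP[a0 a1] /andP[b0 b1] /andP[z0 z1] /andP[w0 w1] mean.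
set y := la * a + (1 - la) * b in mean *.
(* Posteriors y (weight w) and z, versus a, b (weights w la, w (1 - la)) and z. *)
pose p (i : 'I_3) := [:: w * la; w * (1 - la); 1 - w]`_i.
pose x (i : 'I_3) := [:: a; b; z]`_i.
pose q (j : 'I_2) := [:: w; 1 - w]`_j.
pose yq (j : 'I_2) := [:: y; z]`_j.
pose J (i : 'I_3) (j : 'I_2) :=
  (nth [::] [:: [:: w * la; 0]; [:: w * (1 - la); 0]; [:: 0; 1 - w]] i)`_j.
have := W_monotone _ p x _ q yq.
rewrite /expect /is_post_dist /mp_contraction !big_ord_recl !big_ord0 /= /bump.
rewrite /p /x /q /yq /=.
move=> spread.
have {spread} : w * W y + ((1 - w) * W z + 0) <=
    w * la * W a + (w * (1 - la) * W b + ((1 - w) * W z + 0)).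
  apply: spread.
  - do !split; [by case=> -[|[|[]]] //= _; nra | lra | | ].
    + by case=> -[|[|[]]] //= _; apply/andP; split.
    + rewrite -mean /y; ring.
  - do !split; [by case=> -[|[]] //= _; lra | lra | | ].
    + case=> -[|[]] //= _; apply/andP; split; rewrite /y; nra.
    + rewrite -mean; ring.
  - exists J; rewrite /J; do !split.
    + by move=> [[|[|[|i]]] ?] [[|[|j]] ?] //=; nra.
    + by case=> -[|[|[]]] // ?; rewrite !big_ord_recl big_ord0 /= /bump /=; ring.
    + by case=> -[|[]] // ?; rewrite !big_ord_recl big_ord0 /= /bump /=; ring.
    + by case=> -[|[]] // ?; rewrite !big_ord_recl big_ord0 /= /bump /= /y; ring.
move=> ineq; rewrite -(ler_pM2l w0); lra.
Qed.

Lemma blackwell_monotone_convex {a y b : R} : 0 < mu < 1 ->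
  0 <= a -> a < y -> y < b -> b <= 1 ->
  (b - a) * W y <= (b - y) * W a + (y - a) * W b.
Proof.
move=> hmu a0 ay yb b1; have ba : 0 < b - a by lra.
set la := (b - y) / (b - a).
have la01 : 0 <= la <= 1.
  by rewrite divr_ge0 ?ler_pdivrMr ?mul1r //=; lra.
have y_la : y = la * a + (1 - la) * b by rewrite /la; field; lra.
have [z [w [z01 w01 mean]]] := mean_completion y hmu (ltac:(apply/andP; lra)).
have a01 : 0 <= a <= 1 by apply/andP; lra.
have b01 : 0 <= b <= 1 by apply/andP; lra.
have := blackwell_monotone_spread la01 a01 b01 z01 w01.
rewrite -y_la => /(_ mean) convex.
have -> : b - y = (b - a) * la by rewrite /la; field; lra.
have -> : y - a = (b - a) * (1 - la) by rewrite /la; field; lra.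
by clearbody la; rewrite -!mulrA -mulrDr ler_pM2l.
Qed.
End BlackwellConvexity.

Lemma continuous_bool_pair {T : topologicalType} (f : bool * bool -> T) :
  continuous f.
Proof.
move=> [a b]; apply: (near_cst_continuous (f (a, b))).
exists ([set a]%classic, [set b]%classic); first by split; exact: discrete_set1.
by move=> [c d] [/= -> ->].
Qed.

Definition threshold_value {R : realType} (phi : R -> R) (t z : R) : R :=
  if t < phi z then z - t else 0.

Section ThresholdProblems.
Context {R : realType} {mu : R} {phi : R -> R}.
Hypotheses (hmu : 0 < mu < 1) (blackwell : respects_blackwell mu phi).

Lemma threshold_value_monotone (t : R) :
  blackwell_monotone mu (threshold_value phi t).
Proof.
pose u (ab : bool * bool) : R := if ab.1 then ab.2%:R - t else 0.
have EU_act z : EU u z true = z - t by rewrite /EU /u /=; ring.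
have EU_pass z : EU u z false = 0 by rewrite /EU /u /=; ring.
have optimal z : 0 <= z <= 1 -> forall a, EU u z a <= EU u z (t < z).
  by move=> _ a; case: ltP => h; case: a; rewrite ?EU_act ?EU_pass; lra.
have := blackwell bool u (fun z => t < z) bool_compact (continuous_bool_pair u) optimal.
congr blackwell_monotone; apply: funext => z.
by rewrite /threshold_value; case: (t < phi z); rewrite ?EU_act ?EU_pass.
Qed.

Lemma threshold_value_convex (t : R) {a y b : R} : 0 <= a -> a < y -> y < b -> b <= 1 ->
  (b - a) * threshold_value phi t y <=
    (b - y) * threshold_value phi t a + (y - a) * threshold_value phi t b.
Proof. exact: (blackwell_monotone_convex (threshold_value_monotone t) hmu). Qed.

Lemma distortion_gt_right {t b c : R} : 0 <= t -> t < b -> b < c -> c <= 1 ->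
  t < phi b -> t < phi c.
Proof.
move=> t0 tb bc c1 tphib.
have := threshold_value_convex t t0 tb bc c1.
rewrite /threshold_value tphib subrr if_same mulr0 add0r.
by case: ltP => // _; rewrite mulr0; nra.
Qed.

Lemma distortion_le_right {t c y : R} : 0 <= t -> t < c -> c < y -> y < 1 ->
  phi c <= t -> phi y <= t.
Proof.
move=> t0 tc cy y1 phic_t; have c0 : 0 <= c by lra.
have := threshold_value_convex t c0 cy y1 (lexx 1).
rewrite /threshold_value [t < phi c]ltNge phic_t /= mulr0 add0r.
case: ltP => // _ convex.
have : 0 < (1 - y) * (c - t) by rewrite mulr_gt0 // subr_gt0.
by case: ifP convex => _; nra.
Qed.

End ThresholdProblems.

Section NoExpansiveError.
Context {R : realType} {mu : R} {phi : R -> R}.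
Hypotheses (hmu : 0 < mu < 1) (blackwell : respects_blackwell mu phi).
Hypothesis no_expansive : forall z, 0 <= z <= 1 -> ~ expansive_error mu phi z.

Lemma distortion_between (z : R) : mu <= z <= 1 -> mu <= phi z <= z.
Proof.
move=> /andP[muz z1]; have /andP[mu0 _] := hmu.
have z01 : 0 <= z <= 1 by apply/andP; lra.
have /contrapT := no_expansive z z01.
by rewrite /on_segment min_r // max_l.
Qed.

Lemma exists_interior_contraction (x' : R) :
  mu < x' <= 1 -> contractive_error mu phi x' ->
  exists x0, [/\ mu < x0 <= x', x0 < 1 & phi x0 < x0].
Proof.
move=> /andP[mux' x'1] [_ /eqP phix'_neq]; have /andP[mu0 _] := hmu.
have /andP[_ phix'_le] : mu <= phi x' <= x'.
  by apply: distortion_between; rewrite (ltW mux').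
have phix'_lt : phi x' < x' by rewrite lt_neqAle phix'_neq.
have [x'_lt1 | x'_ge1] := ltP x' 1; first by exists x'; rewrite mux' lexx.
have x'_eq1 : x' = 1 by lra.
rewrite x'_eq1 in phix'_lt *; set y := (phi 1 + 1) / 2.
have /andP[mu_phi1 _] : mu <= phi 1 <= 1.
  by apply: distortion_between; rewrite lexx andbT; lra.
have /andP[phi1_y y1] : phi 1 < y < 1 by apply/andP; rewrite /y; lra.
have /andP[_ phiy_le] : mu <= phi y <= y by apply: distortion_between; apply/andP; lra.
exists y; split; [by apply/andP; lra | exact: y1 |].
rewrite lt_neqAle phiy_le andbT; apply/eqP => phiy_eq.
have phi1_ge0 : 0 <= phi 1 by lra.
have := distortion_gt_right hmu blackwell phi1_ge0 phi1_y y1 (lexx 1).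
by rewrite phiy_eq ltxx => /(_ phi1_y).
Qed.

Section Contraction.
Variable x0 : R.
Hypotheses (mu_x0 : mu < x0) (x0_lt1 : x0 < 1) (contraction : phi x0 < x0).

Let mu_le_contraction : mu <= phi x0.
Proof.
have /andP[] // : mu <= phi x0 <= x0.
by apply: distortion_between; rewrite (ltW mu_x0) (ltW x0_lt1).
Qed.

Let contraction_ge0 : 0 <= phi x0.
Proof. by have /andP[mu0 _] := hmu; have := mu_le_contraction; lra. Qed.

Let contraction_lt1 : phi x0 < 1.
Proof. exact: lt_trans contraction x0_lt1. Qed.

Lemma distortion_le_contraction (y : R) : phi x0 < y < 1 -> phi y <= phi x0.
Proof.
move=> /andP[x0y y1]; case: (ltgtP y x0) => [y_x0 | x0_y | -> //].
- rewrite leNgt; apply/negP => /(distortion_gt_right hmu blackwell contraction_ge0 x0y y_x0).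
  by rewrite ltxx => /(_ (ltW x0_lt1)).
- exact: (distortion_le_right hmu blackwell contraction_ge0 contraction x0_y y1 (lexx _)).
Qed.

Lemma lt_distortion_below (t y : R) : 0 <= t < phi x0 -> t < y < 1 -> t < phi y.
Proof.
move=> /andP[t0 t_x0] /andP[ty y1]; case: (ltgtP y x0) => [y_x0 | x0_y | -> //].
- rewrite ltNge; apply/negP => /(distortion_le_right hmu blackwell t0 ty y_x0 x0_lt1).
  by rewrite leNgt t_x0.
- have t_x0' : t < x0 := lt_trans t_x0 contraction.
  exact: (distortion_gt_right hmu blackwell t0 t_x0' x0_y (ltW y1) t_x0).
Qed.

Lemma distortion_id_below (z : R) : mu <= z <= phi x0 -> phi z = z.
Proof.
move=> /andP[muz z_x0]; have /andP[mu0 _] := hmu.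
have z_lt1 : z < 1 := le_lt_trans z_x0 contraction_lt1.
have /andP[mu_phiz phiz_le] : mu <= phi z <= z.
  by apply: distortion_between; apply/andP; lra.
apply/eqP; rewrite eq_le phiz_le leNgt; apply/negP => phiz_lt.
have : phi z < phi z by apply: lt_distortion_below; apply/andP; lra.
by rewrite ltxx.
Qed.

Lemma distortion_flat_above (z : R) : phi x0 <= z < 1 -> phi z = phi x0.
Proof.
move=> /andP[x0z z1]; have [-> | z_neq] := eqVneq z (phi x0).
  by rewrite distortion_id_below // mu_le_contraction lexx.
have x0z_lt : phi x0 < z by rewrite lt_neqAle eq_sym z_neq.
have phiz_le : phi z <= phi x0 by apply: distortion_le_contraction; rewrite x0z_lt.
apply/eqP; rewrite eq_le phiz_le leNgt; apply/negP => phiz_lt.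
have /andP[mu_phiz phiz_z] : mu <= phi z <= z.
  by apply: distortion_between; apply/andP; have := mu_le_contraction; lra.
have /andP[mu0 _] := hmu.
have : phi z < phi z by apply: lt_distortion_below; apply/andP; lra.
by rewrite ltxx.
Qed.

Lemma contraction_le_distortion1 : phi x0 <= phi 1.
Proof.
rewrite leNgt; apply/negP => phi1_lt.
have /andP[mu_phi1 _] : mu <= phi 1 <= 1.
  by apply: distortion_between; rewrite lexx andbT; have := mu_x0; have := x0_lt1; lra.
have /andP[mu0 _] := hmu.
have phi1_ge0 : 0 <= phi 1 by lra.
have phi1_x0 : phi 1 < x0 := lt_trans phi1_lt contraction.
have := distortion_gt_right hmu blackwell phi1_ge0 phi1_x0 x0_lt1 (lexx 1) phi1_lt.
by rewrite ltxx.
Qed.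

Lemma contraction_threshold_shape :
  [/\ mu <= phi x0 < x0,
      (forall z, phi x0 <= z < 1 -> phi z = phi x0),
      (forall z, mu <= z <= phi x0 -> phi z = z) &
      phi x0 <= phi 1].
Proof.
split; [by rewrite mu_le_contraction contraction | exact: distortion_flat_above |
  exact: distortion_id_below | exact: contraction_le_distortion1].
Qed.

End Contraction.
End NoExpansiveError.

Theorem lemma6 (R : realType) (mu : R) (phi : R -> R) (x' : R) :
  0 < mu < 1 ->
  (forall z, 0 <= z <= 1 -> 0 <= phi z <= 1) ->
  respects_blackwell mu phi ->
  mu < x' <= 1 ->
  contractive_error mu phi x' ->
  (forall z, 0 <= z <= 1 -> ~ expansive_error mu phi z) ->
  exists xs : R,
    [/\ mu <= xs < x',
        (forall z, xs <= z < 1 -> phi z = xs),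
        (forall z, mu <= z <= xs -> phi z = z) &
        xs <= phi 1].
Proof.
move=> hmu _ blackwell x'_range x'_contractive no_expansive.
have [x0 [/andP[mu_x0 x0_x'] x0_lt1 contraction]] :=
  exists_interior_contraction hmu blackwell no_expansive x' x'_range x'_contractive.
have [/andP[mu_phix0 phix0_lt] flat fixed phi1] :=
  contraction_threshold_shape hmu blackwell no_expansive x0 mu_x0 x0_lt1 contraction.
exists (phi x0); split => //.
by rewrite mu_phix0 (lt_le_trans phix0_lt x0_x').
Qed.
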